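(* Let $p$ be an odd prime, $q=p^m$, $q=et+1$ with integers $e\geq 2,t\geq 1$, $R_{e,q}=\mathbb{F}_q[u]/\langle u^e-1\rangle$, and let $\varphi:R_{e,q}^n\to\mathbb{F}_q^{en}$ be the Gray map defined by a matrix $M\in GL_e(\mathbb{F}_q)$ with $MM^T=\gamma I_e$, $\gamma\in\mathbb{F}_q^*$ (see context). A linear code $\mathcal{C}$ of length $n$ over $R_{e,q}$ is an LCD code if and only if $\varphi(\mathcal{C})$ is an LCD code of length $en$ over $\mathbb{F}_q$.
   Context: Write $u^e-1=\prod_{i=1}^e(u-\alpha_i)$ over $\mathbb{F}_q$, $G_i=u-\alpha_i$, $\widehat{G}_i=(u^e-1)/G_i$, $z_iG_i+h_i\widehat{G}_i=1$, $\mu_i=h_i\widehat{G}_i$; these are pairwise orthogonal idempotents summing to $1$, and each $r\in R_{e,q}$ is uniquely $r=\sum_i s_i\mu_i$, $s_i\in\mathbb{F}_q$. The Gray map is $\varphi(r_0,\dots,r_{n-1})=(\boldsymbol{r_0}M,\dots,\boldsymbol{r_{n-1}}M)$ with $\boldsymbol{r_j}=(s_{j,1},\dots,s_{j,e})$ for $r_j=\sum_i s_{j,i}\mu_i$. A code is LCD if $\mathcal{C}\cap\mathcal{C}^\perp=\{0\}$, with Euclidean duals. *)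

From HB Require Import structures.
From mathcomp Require Import all_boot all_order all_algebra.
Set Implicit Arguments. Unset Strict Implicit. Unset Printing Implicit Defensive.
Import GRing.Theory.
Local Open Scope ring_scope.

(* The ring R_{e,q} = F[u]/<u^e - 1>, u written 'X. *)
Definition Rring (F : finFieldType) (e : nat) := {poly %/ ('X^e - 1 : {poly F})}.

Section Codes.
Variables (K : comNzRingType) (N : nat).
Definition code := 'rV[K]_N -> Prop.
Definition linear_code (C : code) : Prop :=
  C 0 /\ (forall x y, C x -> C y -> C (x + y)) /\ (forall (a : K) x, C x -> C (a *: x)).
(* Euclidean inner product <x,y> = sum_j x_j y_j, as a 1x1 matrix. *)
Definition euclid_dual (C : code) : code :=
  fun y => forall x, C x -> x *m y^T = 0.
Definition LCD (C : code) : Prop :=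
  forall x, (C x /\ euclid_dual C x) <-> x = 0.
End Codes.

Section Gray.
Variables (F : finFieldType) (e : nat).
Local Notation R := (Rring F e).
Definition Gi (alpha : 'I_e -> F) (i : 'I_e) : {poly F} := 'X - (alpha i)%:P.
Definition Ghat (alpha : 'I_e -> F) (i : 'I_e) : {poly F} :=
  ('X^e - 1) %/ Gi alpha i.
Definition mu (alpha : 'I_e -> F) (h : 'I_e -> {poly F}) (i : 'I_e) : R :=
  in_qpoly ('X^e - 1) (h i * Ghat alpha i).
Definition coords (alpha : 'I_e -> F) (h : 'I_e -> {poly F}) (r : R) : 'rV[F]_e :=
  odflt 0 [pick s : 'rV[F]_e | r == \sum_i s 0 i *: mu alpha h i].
Definition gray (n : nat) (alpha : 'I_e -> F) (h : 'I_e -> {poly F})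
    (M : 'M[F]_e) (c : 'rV[R]_n) : 'rV[F]_(n * e) :=
  mxvec (\matrix_(j < n) (coords alpha h (c 0 j) *m M)).
Definition image_code (n : nat) (f : 'rV[R]_n -> 'rV[F]_(n * e))
    (C : code R n) : code F (n * e) :=
  fun y => exists2 x, C x & y = f x.
End Gray.

(* Evaluation at the e distinct roots alpha_k of u^e - 1 identifies R_{e,q}
   with F^e (Chinese remainder theorem) and sends the idempotent mu_i to the
   i-th unit vector, so the coordinates of r in the basis (mu_i) are the values
   r(alpha_k).  Hence phi(x) = vec(E(x) M) with E(x)_jk = x_j(alpha_k), and
   M M^T = gamma I gives <phi(x), phi(y)> = gamma * sum_k <x, y>(alpha_k).
   So y is orthogonal to C iff phi(y) is orthogonal to phi(C): for the hard
   direction, replacing x in C by mu_i x isolates the value <x, y>(alpha_i).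
   As phi is injective, C and phi(C) are LCD together. *)

From HB Require Import structures.
From mathcomp Require Import all_boot all_order all_algebra.
Set Implicit Arguments. Unset Strict Implicit. Unset Printing Implicit Defensive.
Import GRing.Theory.
Import Pdiv.CommonRing Pdiv.RingMonic.
Local Open Scope ring_scope.

Lemma mk_monic_XnsubC (A : nzRingType) n (c : A) :
  (0 < n)%N -> mk_monic ('X^n - c%:P) = 'X^n - c%:P.
Proof.
by move=> n_gt0; rewrite /mk_monic size_XnsubC // monicXnsubC // ltnS n_gt0.
Qed.

Section QpolyHorner.
Variables (A : comNzRingType) (d : {poly A}).

Definition qhorner (a : A) (r : {poly %/ d}) : A := (r : {poly A}).[a].

Lemma qhorner_is_zmod_morphism a : zmod_morphism (qhorner a).
Proof. by move=> r s; rewrite /qhorner raddfB hornerD hornerN. Qed.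

HB.instance Definition _ a :=
  GRing.isZmodMorphism.Build {poly %/ d} A (qhorner a)
    (qhorner_is_zmod_morphism a).

Lemma qhornerZ a c r : qhorner a (c *: r) = c * qhorner a r.
Proof. by rewrite /qhorner poly_of_qpolyZ hornerZ. Qed.

Variables (a : A) (ha : root (mk_monic d) a).

Lemma horner_rmodp p : (rmodp p (mk_monic d)).[a] = p.[a].
Proof.
rewrite {2}(rdivp_eq (monic_mk_monic d) p) hornerD hornerM.
by rewrite (rootP ha) mulr0 add0r.
Qed.

Lemma qhorner_in_qpoly p : qhorner a (in_qpoly d p) = p.[a].
Proof. exact: horner_rmodp. Qed.

Lemma qhornerM r s : qhorner a (r * s) = qhorner a r * qhorner a s.
Proof. by rewrite /qhorner poly_of_qpolyM horner_rmodp hornerM. Qed.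

End QpolyHorner.

Lemma mx11_eq0 (R : nmodType) (A : 'M[R]_1) : A = 0 <-> A 0 0 = 0.
Proof.
split=> [->|A00]; first by rewrite mxE.
by apply/matrixP => i j; rewrite !ord1 A00 mxE.
Qed.

Lemma euclid_dual0 (K : comNzRingType) N (C : code K N) : euclid_dual C 0.
Proof. by move=> x _; rewrite trmx0 mulmx0. Qed.

Lemma LCD_image_code (F : finFieldType) e n
    (f : 'rV[Rring F e]_n -> 'rV[F]_(n * e)) (C : code _ n) :
    f 0 = 0 -> (forall x, f x = 0 -> x = 0) ->
    (forall y, euclid_dual C y <-> euclid_dual (image_code f C) (f y)) ->
  LCD C <-> LCD (image_code f C).
Proof.
move=> f0 f_eq0 f_dual; split=> lcd v; split.
- by case=> -[c Cc ->] /f_dual dc; rewrite (proj1 (lcd c) (conj Cc dc)) f0.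
- move=> ->; split; last exact: euclid_dual0.
  by exists 0; [exact: (proj2 (lcd 0) erefl).1 | rewrite f0].
- by case=> Cv /f_dual dv; apply/f_eq0/(lcd (f v)); split=> //; exists v.
- move=> ->; split; last exact: euclid_dual0.
  by have [[c Cc /esym/f_eq0 c0] _] := proj2 (lcd 0) erefl; rewrite -c0.
Qed.

Lemma mxvec_dot (R : pzSemiRingType) m n (A B : 'M[R]_(m, n)) :
  (mxvec A *m (mxvec B)^T) 0 0 = \tr (A *m B^T).
Proof.
rewrite mxE (reindex _ (curry_mxvec_bij m n)) /= /mxtrace.
under [RHS]eq_bigr do rewrite mxE.
by rewrite pair_bigA; apply: eq_bigr => -[i j] _; rewrite !mxE !mxvecE.
Qed.

Lemma mxtrace_mulmx_orthogonal (R : comNzRingType) m n (A B : 'M[R]_(m, n))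
    (M : 'M[R]_n) g :
  M *m M^T = g%:M -> \tr ((A *m M) *m (B *m M)^T) = g * \tr (A *m B^T).
Proof.
move=> MMT; rewrite trmx_mul mulmxA -(mulmxA A) MMT mul_mx_scalar -scalemxAl.
exact: mxtraceZ.
Qed.

Section GrayMap.
Variables (F : finFieldType) (e n : nat) (alpha : 'I_e -> F).
Hypothesis e_gt0 : (0 < e)%N.
Hypothesis halpha : ('X^e - 1 : {poly F}) = \prod_(i < e) ('X - (alpha i)%:P).
Variables (z h : 'I_e -> {poly F}).
Hypothesis hzh : forall i, z i * Gi alpha i + h i * Ghat alpha i = 1.
Variables (M : 'M[F]_e) (gamma : F).
Hypothesis M_unit : M \in unitmx.
Hypothesis gamma_neq0 : gamma != 0.
Hypothesis hMM : M *m M^T = gamma%:M.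
Local Notation R := (Rring F e).
Local Notation gray := (@gray F e n alpha h M).

Lemma mk_monic_Xn_sub1 : mk_monic ('X^e - 1 : {poly F}) = 'X^e - 1.
Proof. by rewrite -polyC1 mk_monic_XnsubC. Qed.

Lemma size_Rring (r : R) : (size (r : {poly F}) <= e)%N.
Proof.
apply: leq_trans (size_npoly r) _.
by rewrite mk_monic_Xn_sub1 -polyC1 size_XnsubC.
Qed.

Lemma root_alpha k : root (mk_monic ('X^e - 1)) (alpha k).
Proof.
rewrite mk_monic_Xn_sub1 halpha rootE horner_prod (bigD1 k) //=.
by rewrite hornerXsubC subrr mul0r.
Qed.

Lemma Ghat_prod i : Ghat alpha i = \prod_(j | j != i) ('X - (alpha j)%:P).
Proof.
by rewrite /Ghat /Gi halpha (bigD1 i) //= mulrC mulpK // polyXsubC_eq0.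
Qed.

Lemma Ghat_root i j : j != i -> (Ghat alpha i).[alpha j] = 0.
Proof.
move=> neq_ji; rewrite Ghat_prod horner_prod (bigD1 j) //=.
by rewrite hornerXsubC subrr mul0r.
Qed.

Lemma horner_hGhat i : (h i * Ghat alpha i).[alpha i] = 1.
Proof.
have := congr1 (horner^~ (alpha i)) (hzh i).
by rewrite hornerD hornerM /Gi hornerXsubC subrr mulr0 add0r hornerC.
Qed.

Lemma alpha_inj : injective alpha.
Proof.
move=> i j eq_ij; apply/eqP/negPn/negP => neq_ij.
have := horner_hGhat i; rewrite hornerM eq_ij Ghat_root 1?eq_sym // mulr0.
by move=> /eqP; rewrite eq_sym oner_eq0.
Qed.

Definition eval_roots (r : R) : 'rV[F]_e := \row_k qhorner (alpha k) r.

Lemma qhorner_mu i k : qhorner (alpha k) (mu alpha h i) = (i == k)%:R.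
Proof.
rewrite qhorner_in_qpoly ?root_alpha //.
have [<-|neq_ik] := eqVneq i k; first by rewrite horner_hGhat.
by rewrite hornerM Ghat_root 1?eq_sym // mulr0.
Qed.

Lemma eval_roots_inj : injective eval_roots.
Proof.
move=> r s eq_rs; apply/eqP; rewrite -subr_eq0; apply/eqP/val_inj.
apply: (@roots_geq_poly_eq0 _ _ [seq alpha k | k <- enum 'I_e]).
- apply/allP => _ /mapP [k _ ->]; apply/eqP.
  have /rowP/(_ k) := eq_rs; rewrite !mxE => eq_k.
  by rewrite -[LHS]/(qhorner (alpha k) (r - s)) raddfB /= eq_k subrr.
- by rewrite (map_inj_uniq alpha_inj) enum_uniq.
- by rewrite size_map size_enum_ord size_Rring.
Qed.

Lemma eval_roots_sum_mu (s : 'rV[F]_e) :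
  eval_roots (\sum_i s 0 i *: mu alpha h i) = s.
Proof.
apply/rowP => k; rewrite mxE raddf_sum (bigD1 k) //= big1 => [|i ik].
  by rewrite qhornerZ qhorner_mu eqxx mulr1 addr0.
by rewrite qhornerZ qhorner_mu (negbTE ik) mulr0.
Qed.

Lemma coordsE r : coords alpha h r = eval_roots r.
Proof.
rewrite /coords; case: pickP => [s /eqP -> | no_coords].
  by rewrite eval_roots_sum_mu.
have r_sum : r = \sum_i eval_roots r 0 i *: mu alpha h i.
  by apply: eval_roots_inj; rewrite eval_roots_sum_mu.
by have := no_coords (eval_roots r); rewrite -r_sum eqxx.
Qed.

Definition eval_mx (x : 'rV[R]_n) : 'M[F]_(n, e) :=
  \matrix_(j, k) qhorner (alpha k) (x 0 j).

Lemma grayE x : gray x = mxvec (eval_mx x *m M).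
Proof.
congr mxvec; apply/matrixP => j k; rewrite !mxE coordsE.
by apply: eq_bigr => l _; rewrite !mxE.
Qed.

Lemma mxtrace_eval_mx x y :
  \tr (eval_mx x *m (eval_mx y)^T) = \sum_k qhorner (alpha k) ((x *m y^T) 0 0).
Proof.
rewrite /mxtrace; under eq_bigr do rewrite mxE.
rewrite exchange_big; apply: eq_bigr => k _.
rewrite mxE raddf_sum /=; apply: eq_bigr => j _.
by rewrite !mxE qhornerM ?root_alpha.
Qed.

Lemma gray_dot x y :
  (gray x *m (gray y)^T) 0 0
  = gamma * \sum_k qhorner (alpha k) ((x *m y^T) 0 0).
Proof.
by rewrite !grayE mxvec_dot (mxtrace_mulmx_orthogonal _ _ hMM) mxtrace_eval_mx.
Qed.

Lemma gray0 : gray 0 = 0.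
Proof.
rewrite grayE (_ : eval_mx 0 = 0) ?mul0mx.
  by apply/eqP; rewrite mxvec_eq0.
by apply/matrixP => j k; rewrite !mxE raddf0.
Qed.

Lemma gray_eq0 x : gray x = 0 -> x = 0.
Proof.
rewrite grayE => /eqP; rewrite mxvec_eq0 => /eqP xM0.
have x0 : eval_mx x = 0 by rewrite -(mulmxK M_unit (eval_mx x)) xM0 mul0mx.
apply/rowP => j; rewrite mxE; apply: eval_roots_inj.
by apply/rowP => k; have /matrixP/(_ j k) := x0; rewrite !mxE raddf0.
Qed.

Lemma gray_dual (C : code R n) y : (forall a x, C x -> C (a *: x)) ->
  euclid_dual C y <-> euclid_dual (image_code gray C) (gray y).
Proof.
move=> CZ; split=> [yC _ [x Cx ->] | gyC x Cx].
  apply/mx11_eq0; rewrite gray_dot; have /mx11_eq0 -> := yC x Cx.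
  by rewrite big1 ?mulr0 // => k _; rewrite raddf0.
apply/mx11_eq0/eval_roots_inj/rowP => i.
have xy_i : qhorner (alpha i) ((x *m y^T) 0 0) = 0.
  have /mx11_eq0 := gyC _ (ex_intro2 _ _ (mu alpha h i *: x) (CZ _ _ Cx) erefl).
  rewrite gray_dot -scalemxAl mxE => /eqP.
  rewrite mulf_eq0 (negbTE gamma_neq0) => /eqP <-.
  rewrite (bigD1 i) //= qhornerM ?root_alpha // qhorner_mu.
  rewrite eqxx mul1r big1 ?addr0 // => k ki.
  by rewrite qhornerM ?root_alpha // qhorner_mu eq_sym (negbTE ki) mul0r.
by rewrite [LHS]mxE xy_i [RHS]mxE raddf0.
Qed.

End GrayMap.

Theorem theorem4p8
  (F : finFieldType) (p m e t n : nat)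
  (hp : prime p) (hpodd : odd p) (hq : #|F| = (p ^ m)%N)
  (he : (2 <= e)%N) (ht : (1 <= t)%N) (hqet : #|F| = (e * t).+1)
  (alpha : 'I_e -> F)
  (halpha : ('X^e - 1 : {poly F}) = \prod_(i < e) ('X - (alpha i)%:P))
  (z h : 'I_e -> {poly F})
  (hzh : forall i, z i * Gi alpha i + h i * Ghat alpha i = 1)
  (M : 'M[F]_e) (hM : M \in unitmx) (gamma : F) (hgamma : gamma != 0)
  (hMM : M *m M^T = gamma%:M)
  (C : code (Rring F e) n) (hC : linear_code C) :
  LCD C <-> LCD (image_code (@gray F e n alpha h M) C).
Proof.
(* The hypotheses on p, m and t only serve, in the paper, to guarantee the
   factorisation halpha, which is assumed here directly. *)
have e_gt0 : (0 < e)%N by apply: ltnW.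
have [_ [_ CZ]] := hC.
apply: LCD_image_code.
- exact: gray0.
- by move=> x /(gray_eq0 e_gt0 halpha hzh hM).
- by move=> y; exact: (gray_dual e_gt0 halpha hzh hgamma hMM y CZ).
Qed.
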